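(* Consider the Markovian switching system $x_{k+1}=f(x_k,u_k,\theta_k)$ with constraints $(x_k,u_k)\in Y_{\theta_k}$, stage cost $\ell$, and suppose the controllability assumption below holds (together with the well-posedness assumption). Let $X_N\subseteq\mathbb{R}^n\times\mathcal{N}$ be the set of pairs $(x,\theta)$ for which the EMPC problem $\mathbb{P}(x,\theta)$ is feasible, and let $\kappa_N$ be the associated receding horizon control law. If $\mathbb{P}(x_k,\theta_k)$ is feasible, then $\mathbb{P}(x_{k+1},\theta_{k+1})$ is feasible, where $x_{k+1}=f(x_k,\kappa_N(x_k,\theta_k),\theta_k)$ and $\theta_{k+1}$ is any element of $\mathcal{C}(\theta_k)$.
   Context: Let $\mathcal{N}=\{1,\dots,\nu\}$ and let $\{\theta_k\}_{k\ge 0}$ be a time-homogeneous Markov chain on $\mathcal{N}$ with transition matrix $P=(p_{ij})$ and initial distribution $v$, defined on a filtered probability space $(\Omega,\mathfrak{F},\{\mathfrak{F}_k\}_k,\mathbb{P})$, where $\mathfrak{F}_k$ is the $\sigma$-algebra generated by the history of states, inputs and modes up to time $k$. The system is $x_{k+1}=f(x_k,u_k,\theta_k)$ with $x_k\in\mathbb{R}^n$, $u_k\in\mathbb{R}^m$; at time $k$ both $x_k$ and $\theta_k$ are measured. Constraints: $(x_k,u_k)\in Y_{\theta_k}$, $Y_\theta\subseteq\mathbb{R}^n\times\mathbb{R}^m$. Stage cost $\ell:\mathbb{R}^n\times\mathbb{R}^m\times\mathcal{N}\to\mathbb{R}$. Write $u\lhd\mathfrak{F}_k$ to mean that the random variable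 $u$ is $\mathfrak{F}_k$-measurable. The cover of $i\in\mathcal{N}$ is $\mathcal{C}(i)=\{j\in\mathcal{N}: p_{ij}>0\}$; a bet node of $i$ is some $\mathrm{bet}(i)\in\mathcal{C}(i)$ with $p_{i\,\mathrm{bet}(i)}\ge p_{ij}$ for all $j\in\mathcal{C}(i)$. Well-posedness assumption: for each $\theta$, $\ell(\cdot,\cdot,\theta)$ is nonnegative, lower semicontinuous and level-bounded in $u$ locally uniformly in $x$ (for every $\bar x$ there is a neighbourhood $V$ of $\bar x$ such that $\{(x,u):x\in V,\ \ell(x,u,\theta)\le\alpha\}$ is bounded for every $\alpha$); $f(\cdot,\cdot,\theta)$ is continuous; $Y_\theta$ is nonempty and compact; $\{\theta_k\}$ is irreducible and aperiodic. Optimal steady states: $(x_s^\theta,u_s^\theta)$ is a minimizer of $\ell_s(\theta):=\min_{x,u}\{\ell(x,u,\theta): f(x,u,\theta)=x,\ (x,u)\in Y_\theta\}$. Controllability assumption: for all $i,j\in\mathcal{N}$ there is a control law $\bar u_s:\mathbb{R}^n\times\mathcal{N}\to\mathbb{R}^m$ with $\bar u_s(x_s^i,j)=\bar u_s^{i,j}$ such that $(x_s^i,\bar u_s^{i,j})\in Y_j$ and $f(x_s^i,\bar u_s^{i,j},j)=x_s^{\mathrm{bet}(j)}$. EMPC problem $\mathbb{P}(x,\theta)$: $V_N^\star(x,\theta)=\inf_{\mathbf{u}_N}V_N(x,\theta,\mathbf{u}_N)$, where $\mathbf{u}_N=(u_0,\dots,u_{N-1})$ and $V_N(x_0,\theta_0,\mathbf{u}_N)=\mathbb{E}[\sum_{j=0}^{N-1}\ell(x_j,u_j,\theta_j)\mid\mathfrak{F}_0]$,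 subject to, for $k=0,\dots,N-1$: $x_{k+1}=f(x_k,u_k,\theta_k)$, $(x_k,u_k)\in Y_{\theta_k}$, $(x_0,\theta_0)=(x,\theta)$, $x_N=x_s^{\mathrm{bet}(\theta_{N-1})}$, $u_k\lhd\mathfrak{F}_k$. If $\mathbf{u}^\star(x,\theta)=(u_0^\star(x,\theta),\dots)$ is an optimizer, the receding horizon law is $\kappa_N(x,\theta)=u_0^\star(x,\theta)$. *)

From mathcomp Require Import all_boot all_order all_algebra all_classical all_reals all_analysis.
Import numFieldNormedType.Exports.
Set Implicit Arguments. Unset Strict Implicit. Unset Printing Implicit Defensive.
Import Order.TTheory GRing.Theory Num.Theory.
Local Open Scope ring_scope.
Local Open Scope classical_set_scope.

(* Modes: N = {1,...,nu} is represented by 'I_nu.  States: 'rV[R]_n,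
   inputs: 'rV[R]_m.  A mode history [:: th_0; ...; th_k] is a seq 'I_nu. *)

Section MJLS.
Variables (R : realType) (n m nu : nat).
Local Notation state := 'rV[R]_n.
Local Notation input := 'rV[R]_m.
Local Notation mode := 'I_nu.

Definition stochastic (P : 'M[R]_nu) : Prop :=
  (forall i j, 0 <= P i j) /\ (forall i, \sum_j P i j = 1).

Definition irreducible (P : 'M[R]_nu) : Prop :=
  forall i j : mode, exists k : nat, 0 < (P ^+ k) i j.

Definition aperiodic (P : 'M[R]_nu) : Prop :=
  forall (i : mode) (d : nat),
    (forall k : nat, (0 < k)%N -> 0 < (P ^+ k) i i -> (d %| k)%N) -> d = 1%N.

Definition mode_cover (P : 'M[R]_nu) (i : mode) : set mode := [set j | 0 < P i j].

Definition is_bet (P : 'M[R]_nu) (bet : mode -> mode) : Prop :=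
  forall i : mode, mode_cover P i (bet i) /\
    (forall j, mode_cover P i j -> P i j <= P i (bet i)).

Definition well_posed (P : 'M[R]_nu) (f : state -> input -> mode -> state)
  (Y : mode -> set (state * input)) (ell : state -> input -> mode -> R) : Prop :=
  (forall th : mode,
     (forall x u, 0 <= ell x u th) /\
     lower_semicontinuous (fun p : state * input => ((ell p.1 p.2 th)%:E)) /\
     (forall xbar : state, exists V : set state, nbhs xbar V /\
        forall alpha : R,
          bounded_set [set p : state * input | V p.1 /\ ell p.1 p.2 th <= alpha]) /\
     continuous (fun p : state * input => f p.1 p.2 th) /\
     Y th !=set0 /\ compact (Y th))
  /\ irreducible P /\ aperiodic P.

Definition optimal_steady_states (f : state -> input -> mode -> state)
  (Y : mode -> set (state * input)) (ell : state -> input -> mode -> R)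
  (xs : mode -> state) (us : mode -> input) : Prop :=
  forall th : mode,
    f (xs th) (us th) th = xs th /\ Y th (xs th, us th) /\
    (forall x u, f x u th = x -> Y th (x, u) -> ell (xs th) (us th) th <= ell x u th).

Definition controllable (f : state -> input -> mode -> state)
  (Y : mode -> set (state * input)) (xs : mode -> state) (bet : mode -> mode) : Prop :=
  exists ubar : state -> mode -> input, forall i j : mode,
    Y j (xs i, ubar (xs i) j) /\ f (xs i) (ubar (xs i) j) j = xs (bet j).

(* A causal policy: u_k = pol [:: th_0; ...; th_k]  (u_k is F_k-measurable). *)
Definition policy := seq mode -> input.

Fixpoint xstate (f : state -> input -> mode -> state) (x0 : state) (th0 : mode)
  (pol : policy) (s : seq mode) (k : nat) : state :=
  match k with
  | 0 => x0
  | k'.+1 => f (xstate f x0 th0 pol s k') (pol (take k'.+1 s)) (nth th0 s k')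
  end.

Definition admissible_path (P : 'M[R]_nu) (N : nat) (th : mode) (s : seq mode) : Prop :=
  size s = N /\ head th s = th /\
  (forall i : nat, (i.+1 < N)%N -> 0 < P (nth th s i) (nth th s i.+1)).

(* pol satisfies the constraints of P(x,th) (almost surely, i.e. on every
   positive-probability mode path) *)
Definition feasible_policy (P : 'M[R]_nu) (f : state -> input -> mode -> state)
  (Y : mode -> set (state * input)) (xs : mode -> state) (bet : mode -> mode)
  (N : nat) (x : state) (th : mode) (pol : policy) : Prop :=
  forall s : seq mode, admissible_path P N th s ->
    (forall k : nat, (k < N)%N ->
        Y (nth th s k) (xstate f x th pol s k, pol (take k.+1 s))) /\
    xstate f x th pol s N = xs (bet (nth th s N.-1)).

Definition feasible (P : 'M[R]_nu) (f : state -> input -> mode -> state)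
  (Y : mode -> set (state * input)) (xs : mode -> state) (bet : mode -> mode)
  (N : nat) (x : state) (th : mode) : Prop :=
  exists pol : policy, feasible_policy P f Y xs bet N x th pol.

(* V_N(x, th, pol) = E[ sum_{j<N} ell(x_j,u_j,th_j) | F_0 ], the expectation
   over the mode path th_0 = th, th_1, ..., th_{N-1} of the Markov chain. *)
Definition VN (P : 'M[R]_nu) (f : state -> input -> mode -> state)
  (ell : state -> input -> mode -> R) (N : nat) (x : state) (th : mode)
  (pol : policy) : R :=
  \sum_(t : (N.-1).-tuple mode)
    let s := th :: (t : seq mode) in
    (\prod_(i < N.-1) P (nth th s i) (nth th s i.+1)) *
    \sum_(k < N) ell (xstate f x th pol s k) (pol (take k.+1 s)) (nth th s k).

Definition optimal_policy (P : 'M[R]_nu) (f : state -> input -> mode -> state)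
  (Y : mode -> set (state * input)) (ell : state -> input -> mode -> R)
  (xs : mode -> state) (bet : mode -> mode) (N : nat) (x : state) (th : mode)
  (pol : policy) : Prop :=
  feasible_policy P f Y xs bet N x th pol /\
  forall pol' : policy, feasible_policy P f Y xs bet N x th pol' ->
    VN P f ell N x th pol <= VN P f ell N x th pol'.

Definition kappaN (pol : policy) (th : mode) : input := pol [:: th].

End MJLS.

(* The candidate for P(x', th'), x' = f x (kappa_N(x, th)) th, is the old
   feasible policy shifted by one step, followed in the last step by the
   controllability input.  Prepending th to a positive-probability mode path
   of length N from th' in C(th) and truncating it gives a positive-probability
   path from th, so the old constraints cover the first N - 1 steps.  The old
   terminal constraint puts the state at the start of the last step at an
   optimal steady state xs (bet _), from which the controllability input is
   admissible and leads to xs (bet th'_(N-1)). *)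

From mathcomp Require Import all_boot all_order all_algebra all_classical all_reals all_analysis.
Import numFieldNormedType.Exports.
Set Implicit Arguments. Unset Strict Implicit. Unset Printing Implicit Defensive.
Import Order.TTheory GRing.Theory Num.Theory.
Local Open Scope ring_scope.
Local Open Scope classical_set_scope.

Section RecedingHorizon.
Variables (R : realType) (n m nu : nat).
Local Notation state := 'rV[R]_n.
Local Notation input := 'rV[R]_m.
Local Notation mode := 'I_nu.
Local Notation policy := (policy R m nu).

Variable f : state -> input -> mode -> state.

Lemma eq_xstate (x : state) (th : mode) (pol1 pol2 : policy) (s : seq mode) k :
  (forall j, (j < k)%N -> pol1 (take j.+1 s) = pol2 (take j.+1 s)) ->
  xstate f x th pol1 s k = xstate f x th pol2 s k.
Proof.
elim: k => [|k IHk] //= eq_pol.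
by rewrite IHk ?eq_pol // => j /ltnW; apply: eq_pol.
Qed.

Lemma xstate_take (x : state) (th : mode) (pol : policy) (s : seq mode) j k :
  (k <= j)%N -> xstate f x th pol (take j s) k = xstate f x th pol s k.
Proof.
elim: k => [|k IHk] //= lt_kj.
by rewrite IHk ?(ltnW lt_kj) // take_takel // nth_take.
Qed.

Definition shift_policy (th : mode) (pol : policy) : policy :=
  fun q => pol (th :: q).

Lemma xstate_shift (x : state) (th th' : mode) (pol : policy) (s : seq mode) k :
  (k <= size s)%N ->
  xstate f (f x (pol [:: th]) th) th' (shift_policy th pol) s k =
  xstate f x th pol (th :: s) k.+1.
Proof.
elim: k => [|k IHk] lt_ks /=; first by rewrite take0.
by rewrite IHk ?(ltnW lt_ks) // (set_nth_default th).
Qed.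

Variables (P : 'M[R]_nu) (Y : mode -> set (state * input)).
Variables (xs : mode -> state) (bet : mode -> mode).

Lemma admissible_path_cons N (th th' : mode) (s : seq mode) :
  admissible_path P N th' s -> mode_cover P th th' ->
  admissible_path P N th (take N (th :: s)).
Proof.
move=> [size_s [head_s trans_s]] P_th_th'.
split; first by rewrite size_take /= size_s ltnSn.
split; first by case: (N).
move=> i lt_i1N; rewrite !nth_take ?(ltnW lt_i1N) //.
have lt_is : (i < size s)%N by rewrite size_s ltnW.
case: i lt_i1N lt_is => [|i] lt_i1N lt_is /=.
  by case: s head_s lt_is {trans_s size_s} => // a s /= ->.
by rewrite !(set_nth_default th') // ?trans_s // ltnW.
Qed.

(* On histories of [N] modes, [ubar] is applied at the state predicted by the
   old terminal constraint, [xs (bet th_(N-1))], rather than at the actual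
   state; the two agree on every admissible path. *)
Definition receding_policy (ubar : state -> mode -> input) N (th : mode)
    (pol : policy) : policy :=
  fun q => if (size q < N)%N then shift_policy th pol q
           else ubar (xs (bet (nth th (th :: q) N.-1))) (nth th q N.-1).

Section RecedingPolicy.
Variables (ubar : state -> mode -> input) (N : nat) (x : state).
Variables (th th' : mode) (pol : policy) (s : seq mode).
Hypotheses (N_gt0 : (0 < N)%N) (size_s : size s = N).
Local Notation pol' := (receding_policy ubar N th pol).

Lemma receding_policy_shift (q : seq mode) :
  (size q < N)%N -> pol' q = pol (th :: q).
Proof. by rewrite /receding_policy => ->. Qed.

Lemma receding_policy_last :
  pol' s = ubar (xs (bet (nth th (th :: s) N.-1))) (nth th' s N.-1).
Proof.
rewrite /receding_policy size_s ltnn.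
by rewrite (@set_nth_default _ s th' th) // size_s ltn_predL.
Qed.

Lemma xstate_receding_policy k : (k < N)%N ->
  xstate f (f x (kappaN pol th) th) th' pol' s k =
  xstate f x th pol (take N (th :: s)) k.+1.
Proof.
move=> lt_kN; rewrite (@eq_xstate _ _ _ (shift_policy th pol)); last first.
  move=> j lt_jk; have lt_j1N : (j.+1 < N)%N := leq_ltn_trans lt_jk lt_kN.
  by apply: receding_policy_shift; rewrite size_takel // size_s ltnW.
by rewrite xstate_shift ?xstate_take // size_s ltnW.
Qed.

End RecedingPolicy.

Lemma receding_policy_feasible (ubar : state -> mode -> input) N
    (x : state) (th th' : mode) (pol : policy) :
  (0 < N)%N ->
  (forall i j : mode,
     Y j (xs i, ubar (xs i) j) /\ f (xs i) (ubar (xs i) j) j = xs (bet j)) ->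
  feasible_policy P f Y xs bet N x th pol ->
  mode_cover P th th' ->
  feasible_policy P f Y xs bet N (f x (kappaN pol th) th) th'
    (receding_policy ubar N th pol).
Proof.
move=> N_gt0 ubarP feas_pol P_th_th' s adm_s.
have size_s : size s = N by case: adm_s.
set s0 := take N (th :: s).
have [Y_s0 terminal_s0] := feas_pol s0 (admissible_path_cons adm_s P_th_th').
have succ_predN : N.-1.+1 = N by rewrite prednK.
have last_state :
    xstate f (f x (kappaN pol th) th) th' (receding_policy ubar N th pol) s N.-1 =
    xs (bet (nth th (th :: s) N.-1)).
  rewrite xstate_receding_policy ?ltn_predL // succ_predN terminal_s0.
  by rewrite nth_take ?ltn_predL.
have take_s : take N s = s by rewrite -size_s take_size.
split => [k lt_kN|]; last first.
  rewrite -[X in xstate _ _ _ _ _ X]succ_predN /= last_state succ_predN take_s.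
  rewrite (receding_policy_last _ _ th') //.
  exact: (ubarP _ _).2.
have [lt_k1N|] := ltnP k.+1 N; last first.
  move=> le_Nk1; have -> : k = N.-1.
    by apply/eqP; rewrite -eqSS succ_predN eqn_leq lt_kN le_Nk1.
  rewrite last_state succ_predN take_s (receding_policy_last _ _ th') //.
  exact: (ubarP _ _).1.
have lt_ks : (k < size s)%N by rewrite size_s ltnW.
have mode_k : nth th s0 k.+1 = nth th' s k.
  by rewrite nth_take //= (@set_nth_default _ s th' th).
have input_k : receding_policy ubar N th pol (take k.+1 s) = pol (take k.+2 s0).
  by rewrite receding_policy_shift ?take_takel ?size_takel.
by rewrite xstate_receding_policy // input_k -mode_k; apply: Y_s0.
Qed.

End RecedingHorizon.

Theorem proposition1 (R : realType) (n m nu : nat) (P : 'M[R]_nu)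
  (f : 'rV[R]_n -> 'rV[R]_m -> 'I_nu -> 'rV[R]_n)
  (Y : 'I_nu -> set ('rV[R]_n * 'rV[R]_m))
  (ell : 'rV[R]_n -> 'rV[R]_m -> 'I_nu -> R)
  (xs : 'I_nu -> 'rV[R]_n) (us : 'I_nu -> 'rV[R]_m)
  (bet : 'I_nu -> 'I_nu) (N : nat) :
  (0 < N)%N ->
  stochastic P ->
  is_bet P bet ->
  well_posed P f Y ell ->
  optimal_steady_states f Y ell xs us ->
  controllable f Y xs bet ->
  forall (x : 'rV[R]_n) (th : 'I_nu) (ustar : policy R m nu),
    feasible P f Y xs bet N x th ->
    optimal_policy P f Y ell xs bet N x th ustar ->
    forall th' : 'I_nu, mode_cover P th th' ->
      feasible P f Y xs bet N (f x (kappaN ustar th) th) th'.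
Proof.
move=> N_gt0 _ _ _ _ [ubar ubarP] x th ustar _ [feas_ustar _] th' P_th_th'.
exists (receding_policy xs bet ubar N th ustar).
exact: receding_policy_feasible.
Qed.
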